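(* For every one-red TAP instance, the set of exemplars output by GREEDY has margin at least $\tfrac12$ times the maximum margin of the instance; that is, GREEDY is a $\tfrac12$-approximation for one-red TAP. Consequently GREEDY is a $\tfrac12$-approximation for $2$-weight TAP (instances in which every exemplar contains at most two features and, by the standing preprocessing, at least one red and at least one blue feature).
   Context: Target Approximation Problem (TAP): the input is a groundset $U$ of features, a target $T\subseteq U$, and a collection $S$ of exemplars, each a subset of $U$. Features in $U\cap T$ are blue, features in $U\setminus T$ are red. A feature appears in $S'\subseteq S$ if it lies in $\bigcup_{E\in S'}E$. The margin of $S'$ is (number of blue features appearing in $S'$) minus (number of red features appearing in $S'$); TAP asks for $S'$ of maximum margin. It is assumed that every feature appears in at least one exemplar and that $T$ and all exemplars are nonempty. Standing preprocessing: exemplars with no red feature are always taken and removed together with their features, and exemplars with no blue feature are deleted, so every exemplar contains at least one red and at least one blue feature. An instance is one-red if every exemplar contains exactly one red feature. A red feature $r$ covers a blue feature $b$ if some exemplar contains both. GREEDY: until every blue feature is covered, repeatedly choose the red feature that covers the largest number of not-yet-covered blue features (ties broken arbitrarily); the output is the set of all exemplars containing a chosen red feature. *)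

From mathcomp Require Import all_boot all_order all_algebra.
Set Implicit Arguments. Unset Strict Implicit. Unset Printing Implicit Defensive.
Import GRing.Theory Num.Theory.

(* A TAP instance: finite groundset U of features, target T : {set U},
   exemplars indexed by a finite type I, exemplar i being ex i : {set U}.
   Blue features = those in T, red features = those outside T. *)

Section TAP.
Variables (U I : finType) (T : {set U}) (ex : I -> {set U}).

Definition appearing (S' : {set I}) : {set U} := \bigcup_(i in S') ex i.

Definition margin (S' : {set I}) : int :=
  (#|appearing S' :&: T|%:Z - #|appearing S' :\: T|%:Z)%R.

Definition tap_instance : Prop :=
  (forall u : U, exists i, u \in ex i) /\ T != set0 /\ (forall i, ex i != set0).

Definition preprocessed : Prop :=
  forall i, (exists2 r, r \in ex i & r \notin T) /\ (exists2 b, b \in ex i & b \in T).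

Definition one_red : Prop := forall i, #|ex i :\: T| = 1%N.

Definition two_weight : Prop := forall i, (#|ex i| <= 2)%N.

Definition covers (r b : U) : bool := [exists i, (r \in ex i) && (b \in ex i)].

Definition covered_by (R : seq U) (b : U) : bool := has (fun r => covers r b) R.

Definition gain (R : seq U) (r : U) : nat :=
  #|[set b in T | covers r b && ~~ covered_by R b]|.

(* rs is a possible run of GREEDY (with some tie-breaking): at each step
   some blue feature is still uncovered, and the chosen feature is red and
   maximizes the gain among red features; at the end all blue features are
   covered. *)
Definition greedy_run (rs : seq U) : Prop :=
  (forall (R : seq U) (r : U) (rest : seq U), rs = R ++ r :: rest ->
     [exists b, (b \in T) && ~~ covered_by R b] /\ r \notin T /\
     forall r', r' \notin T -> (gain R r' <= gain R r)%N)
  /\ (forall b, b \in T -> covered_by rs b).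

Definition greedy_output (rs : seq U) : {set I} :=
  [set i | has (fun r => r \in ex i) rs].
End TAP.

From mathcomp Require Import all_boot all_order all_algebra.
From mathcomp Require Import zify.
Set Implicit Arguments. Unset Strict Implicit. Unset Printing Implicit Defensive.

(* Fix a solution S' and let R' be its red features. Every blue feature of
   S' is covered by R', and with one red per exemplar the greedy output has
   margin at least #|T| - size rs. It therefore suffices to show, backwards
   along the run, that #pending + 2 * #(remaining steps) <= #active +
   2 * #uncovered, where pending blue features are the uncovered ones that R'
   covers and active features of R' are those of positive gain. A step of
   gain g removes g uncovered features and at most g pending ones, which pays
   for itself when g >= 2. When g = 1 and the step covers a pending b, greedy
   maximality forces every r' in R' covering b to have had gain 1, namely b,
   so r' becomes inactive. *)

Section Greedy.
Variables (U I : finType) (T : {set U}) (ex : I -> {set U}).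

Definition coverage (r : U) : {set U} := [set b | covers ex r b].

Definition uncovered (R : seq U) : {set U} := [set b in T | ~~ covered_by ex R b].

Definition gain_set (R : seq U) (r : U) : {set U} := uncovered R :&: coverage r.

Lemma gainE R r : gain T ex R r = #|gain_set R r|.
Proof. by apply: eq_card => b; rewrite !inE [covers _ _ _ && _]andbC andbA. Qed.

Lemma uncovered_rcons R r : uncovered (rcons R r) = uncovered R :\: coverage r.
Proof.
by apply/setP => b; rewrite !inE /covered_by has_rcons negb_or andbCA.
Qed.

Lemma gain_set_rcons R r r' :
  gain_set (rcons R r) r' = gain_set R r' :\: coverage r.
Proof. by rewrite /gain_set uncovered_rcons setIDAC. Qed.

Lemma card_uncovered_rcons R r :
  #|uncovered R| = #|uncovered (rcons R r)| + gain T ex R r.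
Proof. by rewrite gainE uncovered_rcons addnC cardsID. Qed.

Lemma gain_rcons_le R r r' : gain T ex (rcons R r) r' <= gain T ex R r'.
Proof. by rewrite !gainE gain_set_rcons subset_leq_card ?subsetDl. Qed.

Lemma gain_rcons_lt R r r' b :
  b \in gain_set R r' -> b \in coverage r ->
  gain T ex (rcons R r) r' < gain T ex R r'.
Proof.
move=> b_r' b_r; rewrite !gainE gain_set_rcons proper_card //.
by apply/properP; split; [exact: subsetDl | exists b; rewrite // inE b_r].
Qed.

Definition greedy_choice (R : seq U) (r : U) : Prop :=
  0 < gain T ex R r /\ forall r', r' \notin T -> gain T ex R r' <= gain T ex R r.

Section Potential.
Variable R' : {set U}.

Definition reachable (b : U) : bool := [exists r in R', covers ex r b].

Definition pending (R : seq U) : {set U} := [set b in uncovered R | reachable b].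

Definition active (R : seq U) : {set U} := [set r in R' | 0 < gain T ex R r].

Lemma pending_rcons R r : pending (rcons R r) = pending R :\: coverage r.
Proof.
by rewrite /pending uncovered_rcons; apply/setP => b; rewrite !inE -!andbA.
Qed.

Lemma card_pending_rcons R r :
  #|pending R| = #|pending (rcons R r)| + #|pending R :&: coverage r|.
Proof. by rewrite pending_rcons addnC cardsID. Qed.

Lemma pending_sub_uncovered R : pending R \subset uncovered R.
Proof. by apply/subsetP => b; rewrite inE => /andP[]. Qed.

Lemma card_active_le R : #|active R| <= #|R'|.
Proof. by apply/subset_leq_card/subsetP => r; rewrite inE => /andP[]. Qed.

Lemma active_rcons_subset R r : active (rcons R r) \subset active R.
Proof.
apply/subsetP => r'; rewrite !inE => /andP[-> gain_pos].
exact: leq_trans gain_pos (gain_rcons_le _ _ _).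
Qed.

Lemma active_rcons_proper R r b :
  (forall r', r' \in R' -> gain T ex R r' <= gain T ex R r) -> gain T ex R r = 1 ->
  b \in pending R -> b \in coverage r -> active (rcons R r) \proper active R.
Proof.
move=> r_max gain1; rewrite inE => /andP[b_unc /existsP[r' /andP[r'R' r'_b]]] b_r.
have b_r' : b \in gain_set R r' by rewrite inE b_unc inE.
have gain_r'_pos : 0 < gain T ex R r' by rewrite gainE; apply/card_gt0P; exists b.
apply/properP; split; first exact: active_rcons_subset.
exists r'; first by rewrite inE r'R' gain_r'_pos.
rewrite inE r'R' lt0n negbK -leqn0 -ltnS -gain1.
exact: leq_trans (gain_rcons_lt b_r' b_r) (r_max _ r'R').
Qed.

Lemma potential_step R r :
  (forall r', r' \in R' -> gain T ex R r' <= gain T ex R r) -> 0 < gain T ex R r ->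
  #|pending R| + #|active (rcons R r)| + 2 <=
    #|pending (rcons R r)| + #|active R| + 2 * gain T ex R r.
Proof.
move=> r_max gain_pos; rewrite (card_pending_rcons R r).
have new_le_gain : #|pending R :&: coverage r| <= gain T ex R r.
  by rewrite gainE subset_leq_card ?setSI ?pending_sub_uncovered.
have active_le := subset_leq_card (active_rcons_subset R r).
have [gain_gt1 | gain_le1] := ltnP 1 (gain T ex R r); first lia.
have gain1 : gain T ex R r = 1 by lia.
have [-> | [b]] := set_0Vmem (pending R :&: coverage r); first by rewrite cards0; lia.
rewrite inE => /andP[b_pend b_r].
have := proper_card (active_rcons_proper r_max gain1 b_pend b_r); lia.
Qed.

Hypothesis R'_red : forall r, r \in R' -> r \notin T.

Lemma pending_potential rs :
  (forall R r rest, rs = R ++ r :: rest -> greedy_choice R r) ->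
  forall rest R, rs = R ++ rest ->
  #|pending R| + 2 * size rest <= #|active R| + 2 * #|uncovered R|.
Proof.
move=> greedy; elim=> [|r rest IH] R rs_eq /=.
  by have := subset_leq_card (pending_sub_uncovered R); lia.
have [gain_pos r_max] := greedy R r rest rs_eq.
have := IH (rcons R r); rewrite cat_rcons => /(_ rs_eq).
have := potential_step (fun r' r'R' => r_max r' (R'_red r'R')) gain_pos.
have := card_uncovered_rcons R r; lia.
Qed.

End Potential.

Lemma uncovered_nil : uncovered [::] = T.
Proof. by apply/setP => b; rewrite inE andbT. Qed.

Lemma uncovered_gain_pos R b :
  (forall u, exists i, u \in ex i) -> preprocessed T ex ->
  b \in T -> ~~ covered_by ex R b -> exists2 r, r \notin T & 0 < gain T ex R r.
Proof.
move=> in_some pre bT b_unc.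
have [i b_i] := in_some b; have [[r r_i rT] _] := pre i.
exists r => //; rewrite gainE; apply/card_gt0P; exists b.
by rewrite !inE bT b_unc; apply/existsP; exists i; rewrite r_i b_i.
Qed.

Lemma greedy_run_step rs :
  tap_instance T ex -> preprocessed T ex -> greedy_run T ex rs ->
  forall R r rest, rs = R ++ r :: rest -> greedy_choice R r.
Proof.
move=> [in_some _] pre [greedy _] R r rest rs_eq.
have [/existsP[b /andP[bT b_unc]] [_ r_max]] := greedy R r rest rs_eq.
have [r0 r0T gain0] := uncovered_gain_pos in_some pre bT b_unc.
by split=> //; apply: leq_trans gain0 (r_max r0 r0T).
Qed.

Lemma greedy_run_red rs r : greedy_run T ex rs -> r \in rs -> r \notin T.
Proof.
move=> [greedy _] r_rs; move: greedy; case/splitPr: r_rs => R rest greedy.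
by have [_ []] := greedy R r rest erefl.
Qed.

Lemma greedy_output_blue rs :
  greedy_run T ex rs -> T \subset appearing ex (greedy_output ex rs).
Proof.
move=> [_ all_covered]; apply/subsetP => b bT.
have /hasP[r r_rs /existsP[i /andP[r_i b_i]]] := all_covered b bT.
by apply/bigcupP; exists i => //; rewrite inE; apply/hasP; exists r.
Qed.

Lemma one_red_unique i x y : one_red T ex ->
  x \in ex i -> x \notin T -> y \in ex i -> y \notin T -> x = y.
Proof.
move=> one x_i xT y_i yT; have /cards1P[z red_i] := introT eqP (one i).
have : x \in ex i :\: T by rewrite inE xT.
have : y \in ex i :\: T by rewrite inE yT.
by rewrite red_i !inE => /eqP -> /eqP ->.
Qed.

Lemma greedy_output_red rs : one_red T ex -> greedy_run T ex rs ->
  #|appearing ex (greedy_output ex rs) :\: T| <= size rs.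
Proof.
move=> one run; apply: leq_trans (card_size rs); apply/subset_leq_card/subsetP => x.
rewrite !inE => /andP[xT /bigcupP[i]]; rewrite inE => /hasP[r r_rs r_i] x_i.
by rewrite (one_red_unique one x_i xT r_i (greedy_run_red run r_rs)).
Qed.

Lemma appearing_blue_pending S' : preprocessed T ex ->
  appearing ex S' :&: T \subset pending (appearing ex S' :\: T) [::].
Proof.
move=> pre; apply/subsetP => b; rewrite !inE => /andP[/bigcupP[i iS b_i] bT].
have [[r r_i rT] _] := pre i.
rewrite bT /=; apply/existsP; exists r; rewrite !inE rT.
by apply/andP; split; [apply/bigcupP; exists i | apply/existsP; exists i; rewrite r_i b_i].
Qed.

Lemma one_red_greedy_margin rs :
  tap_instance T ex -> preprocessed T ex -> one_red T ex -> greedy_run T ex rs ->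
  forall S', (margin T ex S' <= 2 * margin T ex (greedy_output ex rs))%R.
Proof.
move=> tap pre one run S'.
have R'_red r : r \in appearing ex S' :\: T -> r \notin T by rewrite inE => /andP[].
have := pending_potential R'_red (greedy_run_step tap pre run) (R := [::]) erefl.
rewrite uncovered_nil.
have := subset_leq_card (appearing_blue_pending S' pre).
have := card_active_le (appearing ex S' :\: T) [::].
have := greedy_output_red one run.
by rewrite /margin (setIidPr (greedy_output_blue run)); lia.
Qed.

Lemma two_weight_one_red : preprocessed T ex -> two_weight ex -> one_red T ex.
Proof.
move=> pre two i; have [[r r_i rT] [b b_i bT]] := pre i.
have red_proper : ex i :\: T \proper ex i.
  by apply/properP; split; [exact: subsetDl | exists b; rewrite // inE bT].
have red_pos : 0 < #|ex i :\: T| by apply/card_gt0P; exists r; rewrite inE rT.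
by have := proper_card red_proper; have := two i; lia.
Qed.

End Greedy.

Local Open Scope ring_scope.

Theorem theorem13 :
  (forall (U I : finType) (T : {set U}) (ex : I -> {set U}) (rs : seq U),
     tap_instance T ex -> preprocessed T ex -> one_red T ex ->
     greedy_run T ex rs ->
     forall S' : {set I}, margin T ex S' <= 2 * margin T ex (greedy_output ex rs))
  /\
  (forall (U I : finType) (T : {set U}) (ex : I -> {set U}) (rs : seq U),
     tap_instance T ex -> preprocessed T ex -> two_weight ex ->
     greedy_run T ex rs ->
     forall S' : {set I}, margin T ex S' <= 2 * margin T ex (greedy_output ex rs)).
Proof.
split=> U I T ex rs tap pre; first exact: one_red_greedy_margin.
by move=> two; apply: one_red_greedy_margin tap pre (two_weight_one_red pre two).
Qed.
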